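(* For every $n\ge 1$, the upper-diagonal CNMs of size $n$ are in bijection with the permutations in $S_{n-1}$; in particular there are exactly $(n-1)!$ upper-diagonal CNMs of size $n$.
   Context: A complete non-ambiguous matrix (CNM) of size $n$ is an $n\times n$ matrix $M=(m_{i,j})$ with entries in $\{0,1\}$ whose support $T=\{(i,j): m_{i,j}=1\}$ (whose elements are called vertices) satisfies: (1) $(1,1)\in T$; (2) for every $p=(i,j)\in T$ with $p\neq(1,1)$, exactly one of the following holds: there is $(i',j)\in T$ with $i'<i$, or there is $(i,j')\in T$ with $j'<j$; (3) every row and every column of $M$ contains at least one vertex; (4) define the parent of $p=(i,j)\neq(1,1)$ to be $(i',j)$ with $i'<i$ maximal if such a vertex exists, and otherwise $(i,j')$ with $j'<j$ maximal; then every vertex is the parent of either zero or exactly two vertices. A vertex with no children is a leaf. A CNM of size $n$ is upper-diagonal if its leaves are exactly the positions $(i,n+1-i)$, $1\le i\le n$ (i.e. its leaf matrix is the anti-diagonal permutation matrix). *)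

(* Matrices of size n are represented by their support
   T : {set 'I_n * 'I_n}; positions are 0-indexed, so the paper's (1,1)
   is (0,0) and the anti-diagonal (i, n+1-i) becomes (i, n-1-i). *)
From mathcomp Require Import all_boot all_order.
Set Implicit Arguments. Unset Strict Implicit. Unset Printing Implicit Defensive.

Section CNM.
Variable n : nat.
Notation pos := ('I_n * 'I_n)%type.

Definition is_origin (p : pos) : bool := (val p.1 == 0) && (val p.2 == 0).

Definition has_above (T : {set pos}) (p : pos) : bool :=
  [exists q in T, (q.2 == p.2) && (val q.1 < val p.1)].
Definition has_left (T : {set pos}) (p : pos) : bool :=
  [exists q in T, (q.1 == p.1) && (val q.2 < val p.2)].

Definition is_parent (T : {set pos}) (v p : pos) : bool :=
  [&& v \in T, p \in T, ~~ is_origin p &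
   if has_above T p then
     [&& v.2 == p.2, val v.1 < val p.1 &
      ~~ [exists w in T, [&& w.2 == p.2, val v.1 < val w.1 & val w.1 < val p.1]]]
   else
     [&& v.1 == p.1, val v.2 < val p.2 &
      ~~ [exists w in T, [&& w.1 == p.1, val v.2 < val w.2 & val w.2 < val p.2]]]].

Definition nchildren (T : {set pos}) (v : pos) : nat :=
  #|[set p in T | is_parent T v p]|.

Definition is_CNM (T : {set pos}) : bool :=
  [&& [exists p in T, is_origin p],
      [forall p in T, ~~ is_origin p ==> (has_above T p (+) has_left T p)],
      [forall i : 'I_n, exists p in T, p.1 == i],
      [forall j : 'I_n, exists p in T, p.2 == j] &
      [forall v in T, (nchildren T v == 0) || (nchildren T v == 2)]].

Definition is_leaf (T : {set pos}) (v : pos) : bool :=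
  (v \in T) && (nchildren T v == 0).

(* leaf matrix = anti-diagonal permutation matrix *)
Definition is_upper_diagonal_CNM (T : {set pos}) : bool :=
  is_CNM T && [forall p : pos, is_leaf T p == (val p.1 + val p.2 == n.-1)].

End CNM.

(* Upper-diagonal CNMs of size N + 1 are counted through recursive trees on
   {0, ..., N}, i.e. parent maps [f] with [f 0 = 0] and [f j < j] otherwise, of which
   there are N!.  Being upper-diagonal amounts to [ud_shape]: the vertices lie on or
   above the anti-diagonal, include it and the origin, and satisfy the exclusive-or
   axiom; the children of an interior vertex are then its nearest vertices below and
   to the right.  Sending each column [c > 0] to the column of the left neighbour of
   its top vertex gives a recursive tree, from which every row is rebuilt by walking
   left from the anti-diagonal as long as the current vertex has nothing above it.
   Conversely, a tree [f] yields the matrix whose row [N - k] is the path from [k]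
   towards the root, followed until just past the nodes whose subtree has maximum
   [k]; reading its tree back gives [f] again. *)

From mathcomp Require Import all_boot all_order all_fingroup zify.
Set Implicit Arguments. Unset Strict Implicit. Unset Printing Implicit Defensive.

Section UpperDiagonalShape.
Variable N : nat.
Local Notation n := N.+1.
Local Notation pos := ('I_n * 'I_n)%type.

Lemma pos_eq (p q : pos) : val p.1 = val q.1 -> val p.2 = val q.2 -> p = q.
Proof. by case: p q => [a b] [c d] /= /val_inj -> /val_inj ->. Qed.

Lemma origin_eq (p : pos) : is_origin p -> p = (ord0, ord0).
Proof. by case/andP=> /eqP a /eqP b; apply: pos_eq. Qed.

Lemma parent_sum_lt (T : {set pos}) (v p : pos) : is_parent T v p ->
  val v.1 + val v.2 < val p.1 + val p.2.
Proof. by case/and4P=> _ _ _; case: ifP => _ /and3P [/eqP-> lt _]; lia. Qed.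

Lemma leaf_of_max_sum (T : {set pos}) (v : pos) :
  (forall q : pos, q \in T -> val q.1 + val q.2 <= val v.1 + val v.2) ->
  nchildren T v = 0.
Proof.
move=> vmax; apply: eq_card0 => p; rewrite inE; apply/negbTE/andP => -[pT vp].
by have := vmax p pT; have := parent_sum_lt vp; lia.
Qed.

Definition nearest_below (T : {set pos}) (v c : pos) : Prop :=
  [/\ c \in T, c.2 = v.2, val v.1 < val c.1 &
      forall q : pos, q \in T -> q.2 = v.2 -> val v.1 < val q.1 -> val c.1 <= val q.1].

Definition nearest_right (T : {set pos}) (v c : pos) : Prop :=
  [/\ c \in T, c.1 = v.1, val v.2 < val c.2 &
      forall q : pos, q \in T -> q.1 = v.1 -> val v.2 < val q.2 -> val c.2 <= val q.2].

Lemma nearest_below_unique (T : {set pos}) (v c c' : pos) :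
  nearest_below T v c -> nearest_below T v c' -> c = c'.
Proof.
move=> [cT c2 vc cmin] [c'T c'2 vc' c'min].
by apply: pos_eq; [apply/eqP; rewrite eqn_leq cmin ?c'min | rewrite c2 c'2].
Qed.

Lemma nearest_right_unique (T : {set pos}) (v c c' : pos) :
  nearest_right T v c -> nearest_right T v c' -> c = c'.
Proof.
move=> [cT c1 vc cmin] [c'T c'1 vc' c'min].
by apply: pos_eq; [rewrite c1 c'1 | apply/eqP; rewrite eqn_leq cmin ?c'min].
Qed.

Lemma parent_nearest (T : {set pos}) (v p : pos) : is_parent T v p ->
  nearest_below T v p \/ nearest_right T v p.
Proof.
case/and4P=> _ pT _; case: ifP => _ /and3P [/eqP e lt /existsPn nomid].
- left; split=> // q qT q2 vq; rewrite leqNgt; apply/negP => qp.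
  by move: (nomid q); rewrite qT q2 e eqxx vq qp.
- right; split=> // q qT q1 vq; rewrite leqNgt; apply/negP => qp.
  by move: (nomid q); rewrite qT q1 e eqxx vq qp.
Qed.

Lemma nearest_below_parent (T : {set pos}) (v c : pos) : v \in T -> nearest_below T v c ->
  is_parent T v c.
Proof.
move=> vT [cT c2 vc cmin]; apply/and4P; split=> //.
  by apply/nandP; left; apply/eqP; move: vc => /=; lia.
have -> : has_above T c by apply/existsP; exists v; rewrite vT c2 eqxx.
rewrite c2 eqxx vc; apply/existsPn => w; apply/and4P => -[wT /eqP w2 vw wc].
by have := cmin w wT w2 vw; simpl in *; lia.
Qed.

Definition ud_shape (T : {set pos}) : bool :=
  [&& (ord0, ord0) \in T,
      [forall p in T, ~~ is_origin p ==> (has_above T p (+) has_left T p)],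
      [forall p in T, val p.1 + val p.2 <= N] &
      [forall p : pos, (val p.1 + val p.2 == N) ==> (p \in T)]].

Lemma shape_of_CNM (T : {set pos}) : is_upper_diagonal_CNM T -> ud_shape T.
Proof.
case/andP=> /and5P [orig xor _ _ _] /forallP leaves.
have antidiag (p : pos) : val p.1 + val p.2 = N -> p \in T.
  by move=> e; move: (leaves p); rewrite e eqxx => /eqP /andP [].
apply/and4P; split=> //.
- by case/existsP: orig => p /andP [pT /origin_eq <-].
- apply/forallP => p; apply/implyP => pT; rewrite leqNgt; apply/negP => hp.
  have [v vT vmax] := arg_maxnP (fun q : pos => val q.1 + val q.2) pT.
  have /negP [] : is_leaf T v != (val v.1 + val v.2 == N).
    have {}vT : v \in T := vT.
    rewrite /is_leaf vT /= leaf_of_max_sum //.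
    by have := vmax p pT; simpl in *; lia.
  exact: leaves.
- by apply/forallP => p; apply/implyP => /eqP; apply: antidiag.
Qed.

Section Shape.
Variable T : {set pos}.
Hypothesis shapeT : ud_shape T.

Lemma shape_origin : (ord0, ord0) \in T.
Proof. by case/and4P: shapeT. Qed.

Lemma shape_xor (p : pos) : p \in T -> ~~ is_origin p ->
  has_above T p (+) has_left T p.
Proof.
by move=> pT no; case/and4P: shapeT => _ /forallP/(_ p) + _ _; rewrite pT no.
Qed.

Lemma shape_sum_le (p : pos) : p \in T -> val p.1 + val p.2 <= N.
Proof. by case/and4P: shapeT => _ _ /forallP/(_ p) + _ pT; rewrite pT. Qed.

Lemma shape_antidiag (p : pos) : val p.1 + val p.2 = N -> p \in T.
Proof. by case/and4P: shapeT => _ _ _ /forallP/(_ p) /implyP + /eqP; apply. Qed.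

Lemma nearest_right_parent (v c : pos) : v \in T -> nearest_right T v c ->
  is_parent T v c.
Proof.
move=> vT [cT c1 vc cmin].
have c_orig : ~~ is_origin c by apply/nandP; right; apply/eqP; move: vc => /=; lia.
have cleft : has_left T c by apply/existsP; exists v; rewrite vT c1 eqxx.
have cabove : has_above T c = false.
  by move: (shape_xor cT c_orig); rewrite cleft addbT => /negbTE.
apply/and4P; split=> //; rewrite cabove c1 eqxx vc.
apply/existsPn => w; apply/and4P => -[wT /eqP w1 vw wc].
by have := cmin w wT w1 vw; simpl in *; lia.
Qed.

Lemma nearest_below_exists (v : pos) : val v.1 + val v.2 < N ->
  exists c, nearest_below T v c.
Proof.
move=> lt; have lt' : N - val v.2 < n by lia.
pose P q := [&& q \in T, q.2 == v.2 & val v.1 < val q.1].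
have Pw : P (Ordinal lt', v.2) by rewrite /P shape_antidiag /= ?eqxx //; simpl in *; lia.
have [c /and3P [cT /eqP c2 vc] cmin] := arg_minnP (fun q : pos => val q.1) Pw.
by exists c; split=> // q qT q2 vq; apply: cmin; rewrite /P qT q2 eqxx.
Qed.

Lemma nearest_right_exists (v : pos) : val v.1 + val v.2 < N ->
  exists c, nearest_right T v c.
Proof.
move=> lt; have lt' : N - val v.1 < n by lia.
pose P q := [&& q \in T, q.1 == v.1 & val v.2 < val q.2].
have Pw : P (v.1, Ordinal lt') by rewrite /P shape_antidiag /= ?eqxx //; simpl in *; lia.
have [c /and3P [cT /eqP c1 vc] cmin] := arg_minnP (fun q : pos => val q.2) Pw.
by exists c; split=> // q qT q1 vq; apply: cmin; rewrite /P qT q1 eqxx.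
Qed.

Lemma nchildren_interior (v : pos) : v \in T -> val v.1 + val v.2 < N ->
  nchildren T v = 2.
Proof.
move=> vT lt; rewrite /nchildren.
have [c1 below] := nearest_below_exists lt.
have [c2 right] := nearest_right_exists lt.
have -> : [set p in T | is_parent T v p] = [set c1; c2].
  apply/setP => p; rewrite !inE; apply/andP/orP => [[_ /parent_nearest []]|].
  - by left; apply/eqP; apply: nearest_below_unique below.
  - by right; apply/eqP; apply: nearest_right_unique right.
  case=> /eqP ->.
  - by case: (below) => c1T _ _ _; rewrite c1T nearest_below_parent.
  - by case: (right) => c2T _ _ _; rewrite c2T nearest_right_parent.
rewrite cards2; case: below right => _ c12 _ _ [_ _ vc2 _].
by case: eqP => // e; rewrite -e c12 ltnn in vc2.
Qed.

Lemma CNM_of_shape : is_upper_diagonal_CNM T.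
Proof.
have nch (v : pos) : v \in T -> nchildren T v = (val v.1 + val v.2 != N).*2.
  move=> vT; have := shape_sum_le vT; rewrite leq_eqVlt => /orP [/eqP e|lt].
    by rewrite e eqxx leaf_of_max_sum // => q /shape_sum_le; rewrite e.
  by rewrite nchildren_interior // neq_ltn lt.
apply/andP; split.
  apply/and5P; split.
  - by apply/existsP; exists (ord0, ord0); rewrite shape_origin.
  - by apply/forallP => p; apply/implyP => pT; apply/implyP; apply: shape_xor.
  - apply/forallP => i; have lt : N - val i < n by lia.
    apply/existsP; exists (i, Ordinal lt).
    by rewrite shape_antidiag //=; have := ltn_ord i; lia.
  - apply/forallP => j; have lt : N - val j < n by lia.
    apply/existsP; exists (Ordinal lt, j).
    by rewrite shape_antidiag //=; have := ltn_ord j; lia.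
  - by apply/forallP => v; apply/implyP => /nch ->; case: (_ != N).
apply/forallP => p; rewrite /is_leaf.
case: (boolP (p \in T)) => [pT | pnT] /=; first by rewrite nch //; simpl in *; lia.
by apply/eqP/esym/negbTE; apply: contra pnT => /eqP; apply: shape_antidiag.
Qed.

End Shape.

Lemma upper_diagonal_CNM_shape (T : {set pos}) :
  is_upper_diagonal_CNM T = ud_shape T.
Proof. by apply/idP/idP; [apply: shape_of_CNM | apply: CNM_of_shape]. Qed.

End UpperDiagonalShape.

Section RecursiveTree.
Variable N : nat.
Local Notation n := N.+1.
Local Notation pos := ('I_n * 'I_n)%type.

Definition recursive_tree (f : {ffun 'I_n -> 'I_n}) : bool :=
  [forall j, f j < maxn 1 j].

Variable f : {ffun 'I_n -> 'I_n}.

Lemma ancestor_total (k a b : 'I_n) : fconnect f k a -> fconnect f k b ->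
  fconnect f a b || fconnect f b a.
Proof.
move=> /iter_findex <- /iter_findex <-.
case: (leqP (findex f k a) (findex f k b)) => [|/ltnW] le_ab; apply/orP; [left | right];
  by rewrite -(subnK le_ab) iterD fconnect_iter.
Qed.

Definition subtree_max (j : 'I_n) : 'I_n := [arg max_(k > j | fconnect f k j) k].

Lemma subtree_max_desc (j : 'I_n) : fconnect f (subtree_max j) j.
Proof. by rewrite /subtree_max; case: arg_maxnP => //; apply: connect0. Qed.

Lemma leq_subtree_max (j k : 'I_n) : fconnect f k j -> k <= subtree_max j.
Proof.
by rewrite /subtree_max; case: arg_maxnP => [|m _ mmax /mmax //]; apply: connect0.
Qed.

Lemma subtree_max_mono (a b : 'I_n) : fconnect f b a ->
  subtree_max b <= subtree_max a.
Proof. by move=> ba; apply/leq_subtree_max/(connect_trans (subtree_max_desc b)). Qed.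

Lemma subtree_max_between (j u : 'I_n) : fconnect f (subtree_max j) u ->
  fconnect f u j -> subtree_max u = subtree_max j.
Proof.
move=> ju uj; apply: ord_inj; apply/eqP.
by rewrite eqn_leq subtree_max_mono ?leq_subtree_max.
Qed.

Definition cnm_of_tree : {set pos} :=
  [set p : pos | fconnect f (rev_ord p.1) p.2 &&
    [forall u, [&& fconnect f (rev_ord p.1) u, fconnect f u p.2 & u != p.2] ==>
               (subtree_max u == rev_ord p.1)]].

Lemma mem_cnm_of_tree (r w : 'I_n) :
  reflect (fconnect f (rev_ord r) w /\
           forall u, fconnect f (rev_ord r) u -> fconnect f u w -> u != w ->
             subtree_max u = rev_ord r)
          ((r, w) \in cnm_of_tree).
Proof.
rewrite inE /=; apply: (iffP andP) => -[rw mid]; split=> //.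
  by move=> u ru uw neq; apply/eqP; move/forallP/(_ u): mid; rewrite ru uw neq.
by apply/forallP => u; apply/implyP => /and3P [ru uw neq]; rewrite mid.
Qed.

Lemma cnm_top (j : 'I_n) : (rev_ord (subtree_max j), j) \in cnm_of_tree.
Proof.
apply/mem_cnm_of_tree; rewrite rev_ordK; split=> [|u ju uj _].
  exact: subtree_max_desc.
exact: subtree_max_between.
Qed.

Lemma cnm_has_above (r c : 'I_n) :
  has_above cnm_of_tree (r, c) = (N < r + subtree_max c).
Proof.
apply/existsP/idP => [[[r' c'] /andP [/mem_cnm_of_tree [rc _] /andP [/eqP /= e lt]]] | lt].
  by move: rc lt; rewrite e => /leq_subtree_max /=; lia.
exists (rev_ord (subtree_max c), c); rewrite cnm_top eqxx /=.
by have := ltn_ord (subtree_max c); lia.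
Qed.

Hypothesis tree_f : recursive_tree f.

Lemma parent_le_pred (j : 'I_n) : f j <= j - 1.
Proof. by move/forallP: tree_f => /(_ j) /=; lia. Qed.

Lemma parent_lt (j : 'I_n) : 0 < j -> f j < j.
Proof. by have := parent_le_pred j; lia. Qed.

Lemma parent_root (j : 'I_n) : j = 0 :> nat -> f j = j.
Proof. by move=> j0; apply: ord_inj; have := parent_le_pred j; lia. Qed.

Lemma iter_parent_le m (k : 'I_n) : iter m f k <= k - m.
Proof.
elim: m => [|m IH] /=; first by lia.
(* [set] merges copies of the iterate that differ only in their implicit instances,
   which [lia] would otherwise treat as distinct atoms. *)
by move: IH; have := parent_le_pred (iter m f k); set x := iter m f k; lia.
Qed.

Lemma ancestor_le (k j : 'I_n) : fconnect f k j -> j <= k.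
Proof.
by move/iter_findex <-; have := iter_parent_le (findex f k j) k; set x := iter _ _ _; lia.
Qed.

Lemma ancestor_antisym (a b : 'I_n) : fconnect f a b -> fconnect f b a -> a = b.
Proof. by move=> /ancestor_le ba /ancestor_le ab; apply: ord_inj; lia. Qed.

Lemma ancestor_root (k : 'I_n) : fconnect f k ord0.
Proof.
have -> : ord0 = iter k f k.
  by apply: ord_inj => /=; have := iter_parent_le k k; set x := iter _ _ _; lia.
exact: fconnect_iter.
Qed.

Lemma ancestor_lt (k a b : 'I_n) : fconnect f k a -> fconnect f k b ->
  a < b -> fconnect f b a.
Proof.
by move=> ka kb; case/orP: (ancestor_total ka kb) => // /ancestor_le; lia.
Qed.

Lemma subtree_max_root : subtree_max ord0 = ord_max.
Proof.
apply: ord_inj; have := leq_subtree_max (ancestor_root ord_max).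
by have := ltn_ord (subtree_max ord0); rewrite /=; lia.
Qed.

Lemma cnm_left (j : 'I_n) : (rev_ord (subtree_max j), f j) \in cnm_of_tree.
Proof.
have kj := subtree_max_desc j.
apply/mem_cnm_of_tree; rewrite rev_ordK; split=> [|u ku ufj neq].
  exact: connect_trans kj (fconnect1 f j).
apply: (subtree_max_between ku); case/orP: (ancestor_total ku kj) => // ju.
case: (eqVneq j u) => [-> | jneq]; first exact: connect0.
have fju : fconnect f (f j) u by move: ju; rewrite fconnect_eqVf (negbTE jneq).
by rewrite (ancestor_antisym ufj fju) eqxx in neq.
Qed.

Lemma cnm_no_left (r c : 'I_n) : (r, c) \in cnm_of_tree ->
  N < r + subtree_max c -> ~~ has_left cnm_of_tree (r, c).
Proof.
move=> /mem_cnm_of_tree [rc _] lt; apply/existsPn => -[r' w] /=.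
apply/andP => -[rw /andP [/eqP er wc]]; rewrite {}er in rw.
case/mem_cnm_of_tree: rw => rw mid.
have cneq : c != w by apply: contraTneq wc => ->; rewrite ltnn.
have := mid c rc (ancestor_lt rw rc wc) cneq => /(congr1 val) /=.
by have := ltn_ord r; lia.
Qed.

Lemma cnm_left_le (r w c : 'I_n) : (r, w) \in cnm_of_tree ->
  subtree_max c = rev_ord r -> w < c -> w <= f c.
Proof.
move=> /mem_cnm_of_tree [rw _] e wc.
have rc : fconnect f (rev_ord r) c by rewrite -e subtree_max_desc.
have cneq : c != w by apply: contraTneq wc => ->; rewrite ltnn.
by move: (ancestor_lt rw rc wc); rewrite fconnect_eqVf (negbTE cneq) => /ancestor_le.
Qed.

Lemma cnm_xor (r c : 'I_n) : (r, c) \in cnm_of_tree -> ~~ is_origin (r, c) ->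
  has_above cnm_of_tree (r, c) (+) has_left cnm_of_tree (r, c).
Proof.
move=> rcT not_orig; rewrite cnm_has_above.
case: (ltnP N (r + subtree_max c)) => [lt | le].
  by rewrite (negbTE (cnm_no_left rcT lt)).
have e : subtree_max c = rev_ord r.
  apply: ord_inj; case/mem_cnm_of_tree: rcT => /leq_subtree_max + _ => /=.
  by have := ltn_ord r; lia.
have c0 : 0 < c.
  rewrite lt0n; apply: contra not_orig => /eqP c0.
  have : subtree_max c = ord_max.
    by rewrite (_ : c = ord0) ?subtree_max_root //; apply: ord_inj.
  rewrite e => /(congr1 val) /=; rewrite /is_origin /= c0 eqxx andbT => ?.
  by apply/eqP; lia.
apply/existsP; exists (r, f c); apply/andP; split; last by rewrite /= eqxx parent_lt.
by have := cnm_left c; rewrite e rev_ordK.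
Qed.

Lemma cnm_of_tree_shape : ud_shape cnm_of_tree.
Proof.
apply/and4P; split.
- have := cnm_top ord0; rewrite subtree_max_root (_ : rev_ord ord_max = ord0) //.
  by apply: ord_inj => /=; lia.
- by apply/forallP => -[r c]; apply/implyP => rcT; apply/implyP; apply: cnm_xor.
- apply/forallP => -[r c]; apply/implyP => /mem_cnm_of_tree [/ancestor_le + _] /=.
  by have := ltn_ord r; rewrite /=; lia.
- apply/forallP => -[r c]; apply/implyP => /eqP /= e.
  have -> : c = rev_ord r by apply: ord_inj => /=; lia.
  apply/mem_cnm_of_tree; split=> [|u ku uk]; first exact: connect0.
  by rewrite (ancestor_antisym ku uk) eqxx.
Qed.

End RecursiveTree.

Section TreeOfCNM.
Variable N : nat.
Local Notation n := N.+1.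
Local Notation pos := ('I_n * 'I_n)%type.

Definition left_of_top (T : {set pos}) (c w : 'I_n) : bool :=
  [exists r : 'I_n, [&& (r, c) \in T, ~~ has_above T (r, c), (r, w) \in T, w < c &
     ~~ [exists v : 'I_n, [&& (r, v) \in T, w < v & v < c]]]].

(* Column [0] has no [left_of_top] and is sent to [0]. *)
Definition tree_of_cnm (T : {set pos}) : {ffun 'I_n -> 'I_n} :=
  [ffun c => odflt ord0 [pick w | left_of_top T c w]].

Lemma tree_of_cnm_recursive (T : {set pos}) : recursive_tree (tree_of_cnm T).
Proof.
apply/forallP => c; rewrite ffunE.
by case: pickP => [w /existsP [r /and5P [_ _ _ wc _]]|_] /=; lia.
Qed.

Lemma no_above_unique (T : {set pos}) (r r' c : 'I_n) : (r, c) \in T -> (r', c) \in T ->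
  ~~ has_above T (r, c) -> ~~ has_above T (r', c) -> r = r'.
Proof.
move=> rcT r'cT na na'; apply: ord_inj; case: (ltngtP r r') => // lt.
  by case/negP: na'; apply/existsP; exists (r, c); rewrite rcT eqxx.
by case/negP: na; apply/existsP; exists (r', c); rewrite r'cT eqxx.
Qed.

Section Shape.
Variable T : {set pos}.
Hypothesis shapeT : ud_shape T.
Local Notation g := (tree_of_cnm T).

Lemma tree_of_cnm_spec (r c : 'I_n) : (r, c) \in T -> ~~ has_above T (r, c) -> 0 < c ->
  [/\ (r, g c) \in T, g c < c &
      forall w : 'I_n, (r, w) \in T -> g c < w -> w < c -> False].
Proof.
move=> rcT na c0.
have not_orig : ~~ is_origin (r, c) by rewrite /is_origin /= (gtn_eqF c0) andbF.
have /existsP [[r' w] /andP [wT /andP [/eqP /= er wc]]] : has_left T (r, c).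
  by move: (shape_xor shapeT rcT not_orig); rewrite (negbTE na).
rewrite {}er in wT.
pose P (v : 'I_n) := ((r, v) \in T) && (v < c).
have Pw : P w by rewrite /P wT.
have [l /andP [lT lc] lmax] := arg_maxnP (fun v : 'I_n => v : nat) Pw.
have l_left : left_of_top T c l.
  apply/existsP; exists r; rewrite rcT na lT lc /=; apply/existsPn => v.
  by apply/and3P => -[vT lv vc]; have := lmax v; rewrite /P vT vc; lia.
rewrite ffunE; case: pickP => [w' /existsP [r'' /and5P [r''T na'' w'T w'c mid]] | /(_ l)].
  rewrite (no_above_unique r''T rcT na'' na) in w'T mid; split=> // v vT w'v vc.
  by case/negP: mid; apply/existsP; exists v; rewrite vT w'v vc.
by rewrite l_left.
Qed.

Lemma row_of_iter (r k : 'I_n) m : r + k = N ->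
  (forall m', m' < m -> ~~ has_above T (r, iter m' g k)) -> (r, iter m g k) \in T.
Proof.
move=> rk; elim: m => [|m IH] above; first exact: (shape_antidiag shapeT).
have rT : (r, iter m g k) \in T by apply: IH => m' lt; apply: above; lia.
rewrite iterS; case: (posnP (iter m g k)) => [x0 | x0].
  by rewrite (parent_root (tree_of_cnm_recursive T) x0).
by case: (tree_of_cnm_spec rT (above m (ltnSn m)) x0).
Qed.

Lemma iter_of_row (r k c : 'I_n) : r + k = N -> (r, c) \in T ->
  exists m, c = iter m g k /\ forall m', m' < m -> ~~ has_above T (r, iter m' g k).
Proof.
move=> rk; have [d] := ubnP (k - c); elim: d c => // d IH c ltd rcT.
have ck : c <= k by have := shape_sum_le shapeT rcT; rewrite /=; lia.
case: (eqVneq c k) => [-> | neq]; first by exists 0.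
have lt_ck : c < k by rewrite ltn_neqAle ck andbT; exact: neq.
have [[r' c'] [c'T /= er cc' c'min]] : exists q, nearest_right T (r, c) q.
  by apply: (nearest_right_exists shapeT); rewrite /=; lia.
rewrite {}er in c'T c'min.
have c'k : c' <= k by have := shape_sum_le shapeT c'T; rewrite /=; lia.
have [m [e above]] := IH c' ltac:(rewrite /=; lia) c'T.
have c'0 : 0 < c' by rewrite (leq_ltn_trans _ cc').
have not_orig : ~~ is_origin (r, c') by rewrite /is_origin /= (gtn_eqF c'0) andbF.
have c'left : has_left T (r, c') by apply/existsP; exists (r, c); rewrite rcT eqxx.
have na : ~~ has_above T (r, c').
  by move: (shape_xor shapeT c'T not_orig); rewrite c'left addbT.
have [gT gc' gmid] := tree_of_cnm_spec c'T na c'0.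
have gc : g c' = c.
  apply: ord_inj; case: (ltngtP (g c') c) => // [gc | cg].
    by case: (gmid _ rcT gc cc').
  by have := c'min (r, g c') gT erefl cg; rewrite /=; lia.
exists m.+1; split; first by rewrite iterS -e gc.
by move=> m'; rewrite ltnS leq_eqVlt => /orP [/eqP -> | /above]; rewrite -?e.
Qed.

End Shape.
End TreeOfCNM.

Lemma tree_of_cnm_inj (N : nat) (T1 T2 : {set 'I_N.+1 * 'I_N.+1}) :
  ud_shape T1 -> ud_shape T2 -> tree_of_cnm T1 = tree_of_cnm T2 -> T1 = T2.
Proof.
move=> shape1 shape2 eg; apply/setP => -[r c].
have [d] := ubnP (nat_of_ord r); elim: d r c => // d IH r c ltr.
have rk : r + rev_ord r = N by have := ltn_ord r; rewrite /=; lia.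
have above x : has_above T1 (r, x) = has_above T2 (r, x).
  apply: eq_existsb => -[q1 q2] /=; case: (ltnP q1 r) => lt; last by rewrite !andbF.
  by rewrite IH //; lia.
apply/idP/idP => rcT.
  have [m [-> above_m]] := iter_of_row shape1 rk rcT.
  by rewrite eg; apply: row_of_iter => // m' /above_m; rewrite above eg.
have [m [-> above_m]] := iter_of_row shape2 rk rcT.
by rewrite -eg; apply: row_of_iter => // m' /above_m; rewrite -above eg.
Qed.

Lemma tree_of_cnmK (N : nat) (f : {ffun 'I_N.+1 -> 'I_N.+1}) :
  recursive_tree f -> tree_of_cnm (cnm_of_tree f) = f.
Proof.
move=> tree_f; apply/ffunP => c.
case: (posnP c) => [c0 | c0].
  by rewrite (parent_root (tree_of_cnm_recursive _) c0) (parent_root tree_f c0).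
set T := cnm_of_tree f; set r := rev_ord (subtree_max f c).
have rcT : (r, c) \in T := cnm_top f c.
have na : ~~ has_above T (r, c).
  by rewrite cnm_has_above //= -leqNgt; have := ltn_ord (subtree_max f c); lia.
have [gT gc gmid] := tree_of_cnm_spec (cnm_of_tree_shape tree_f) rcT na c0.
have le : tree_of_cnm T c <= f c by apply: (cnm_left_le tree_f gT _ gc); rewrite rev_ordK.
apply: ord_inj; case: (ltngtP (tree_of_cnm T c) (f c)) le => // lt _.
by case: (gmid _ (cnm_left tree_f c) lt (parent_lt tree_f c0)).
Qed.

Lemma card_ord_lt (n m : nat) : m <= n -> #|[pred k : 'I_n | k < m]| = m.
Proof.
move=> le_mn; have widen_inj : injective (widen_ord le_mn) by move=> a b [] /ord_inj.
rewrite -[RHS](card_ord m) -(card_imset _ widen_inj); apply: eq_card => k.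
rewrite inE /=; apply/idP/imsetP => [km | [i _ ->]]; last by rewrite /= ltn_ord.
by exists (Ordinal km) => //; apply: ord_inj.
Qed.

Lemma card_recursive_tree (N : nat) :
  #|[set f : {ffun 'I_N.+1 -> 'I_N.+1} | recursive_tree f]| = N`!.
Proof.
rewrite (eq_card (B := family (fun j : 'I_N.+1 => [pred k : 'I_N.+1 | k < maxn 1 j]))).
  rewrite card_family foldrE big_map big_enum /= big_ord_recl /= fact_prod big_add1.
  rewrite big_mkord card_ord_lt // mul1n; apply: eq_bigr => j _.
  have le_jN : j.+1 <= N.+1 by rewrite ltnS ltnW.
  rewrite -(card_ord_lt le_jN); apply: eq_card => k.
  by rewrite !inE /bump /=; lia.
by move=> f; rewrite inE.
Qed.

Lemma card_upper_diagonal_CNM (N : nat) :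
  #|[set T : {set 'I_N.+1 * 'I_N.+1} | is_upper_diagonal_CNM T]| = N`!.
Proof.
have inj : {in [set T | ud_shape T] &, injective (@tree_of_cnm N)}.
  by move=> T1 T2; rewrite !inE; apply: tree_of_cnm_inj.
transitivity #|[set T : {set 'I_N.+1 * 'I_N.+1} | ud_shape T]|.
  by apply: eq_card => T; rewrite !inE upper_diagonal_CNM_shape.
rewrite -(card_in_imset inj) -card_recursive_tree; apply: eq_card => f.
rewrite inE; apply/imsetP/idP => [[T _ ->] | tree_f]; first exact: tree_of_cnm_recursive.
by exists (cnm_of_tree f); rewrite ?inE ?cnm_of_tree_shape ?tree_of_cnmK.
Qed.

Lemma card_eq_bijective (A B : finType) : #|A| = #|B| -> exists f : A -> B, bijective f.
Proof.
move=> eAB; exists (fun x => enum_val (cast_ord eAB (enum_rank x))).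
exists (fun y => enum_val (cast_ord (esym eAB) (enum_rank y))) => [x | y] /=.
  by rewrite enum_valK cast_ordK enum_rankK.
by rewrite enum_valK cast_ordKV enum_rankK.
Qed.

Theorem theorem4p3 (n : nat) (hn : 1 <= n) :
  (exists f : {T : {set 'I_n * 'I_n} | is_upper_diagonal_CNM T} -> 'S_(n.-1),
      bijective f) /\
  #|[set T : {set 'I_n * 'I_n} | is_upper_diagonal_CNM T]| = (n.-1)`!.
Proof.
case: n hn => [//|N] _; split; last exact: card_upper_diagonal_CNM.
apply: card_eq_bijective.
by rewrite card_sig card_Sn -card_upper_diagonal_CNM; apply: eq_card => T; rewrite !inE.
Qed.
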